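(* Let $\mathcal{A}\in\mathbb{C}^{I_{1\ldots N}\times I_{1\ldots N}}$ with $\mathcal{A}\neq\mathcal{O}$, and let $\mathcal{M},\mathcal{N}\in\mathbb{C}^{I_{1\ldots N}\times I_{1\ldots N}}$ be Hermitian positive definite tensors. Then $$1\le\|\mathcal{A}\|_{\mathcal{M}\mathcal{N}}\,\|\mathcal{A}^{\dagger}_{\mathcal{M},\mathcal{N}}\|_{\mathcal{N}\mathcal{M}}\le4\,w(\tilde{\mathcal{A}})\,w(\tilde{\mathcal{A}}^{\dagger}),$$ where $\tilde{\mathcal{A}}=\mathcal{M}^{1/2}*_N\mathcal{A}*_N\mathcal{N}^{-1/2}$.
   Context: Write $I_{1\ldots N}$ for $I_1\times\cdots\times I_N$; $\mathcal{O}$ is the zero tensor. Einstein product: $(\mathcal{A}*_N\mathcal{B})_{i_1\ldots i_Nj_1\ldots j_L}=\sum_{k_1,\ldots,k_N}a_{i_1\ldots i_Nk_1\ldots k_N}b_{k_1\ldots k_Nj_1\ldots j_L}$ (also when $\mathcal{B}\in\mathbb{C}^{I_{1\ldots N}}$). $\mathcal{A}^H$ is the conjugate transpose; inverses are w.r.t. $*_N$. $\langle\mathcal{X},\mathcal{Y}\rangle=\mathcal{Y}^H*_N\mathcal{X}$, $\|\mathcal{X}\|=\langle\mathcal{X},\mathcal{X}\rangle^{1/2}$. $\mathcal{M}$ is Hermitian positive definite if $\mathcal{M}^H=\mathcal{M}$ and $\langle\mathcal{M}*_N\mathcal{X},\mathcal{X}\rangle>0$ for nonzero $\mathcal{X}$;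 $\mathcal{M}^{1/2}$ is its unique Hermitian positive definite square root and $\mathcal{N}^{-1/2}=(\mathcal{N}^{1/2})^{-1}$. Weighted norms: $\|\mathcal{X}\|_{\mathcal{M}}=\langle\mathcal{M}*_N\mathcal{X},\mathcal{X}\rangle^{1/2}$, $\|\mathcal{X}\|_{\mathcal{N}}=\langle\mathcal{N}*_N\mathcal{X},\mathcal{X}\rangle^{1/2}$, $\|\mathcal{A}\|_{\mathcal{M}\mathcal{N}}=\sup\{\|\mathcal{A}*_N\mathcal{X}\|_{\mathcal{M}}:\|\mathcal{X}\|_{\mathcal{N}}=1\}$, $\|\mathcal{B}\|_{\mathcal{N}\mathcal{M}}=\sup\{\|\mathcal{B}*_N\mathcal{X}\|_{\mathcal{N}}:\|\mathcal{X}\|_{\mathcal{M}}=1\}$. Numerical range $W(\mathcal{A})=\{\langle\mathcal{A}*_N\mathcal{X},\mathcal{X}\rangle:\|\mathcal{X}\|=1\}$ and numerical radius $w(\mathcal{A})=\max\{|z|:z\in W(\mathcal{A})\}$. Weighted Moore-Penrose inverse $\mathcal{A}^{\dagger}_{\mathcal{M},\mathcal{N}}$: the unique $\mathcal{X}$ with $\mathcal{A}*_N\mathcal{X}*_N\mathcal{A}=\mathcal{A}$, $\mathcal{X}*_N\mathcal{A}*_N\mathcal{X}=\mathcal{X}$, $(\mathcal{M}*_N\mathcal{A}*_N\mathcal{X})^H=\mathcal{M}*_N\mathcal{A}*_N\mathcal{X}$, $(\mathcal{N}*_N\mathcal{X}*_N\mathcal{A})^H=\mathcal{N}*_N\mathcal{X}*_N\mathcal{A}$;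 $\tilde{\mathcal{A}}^{\dagger}$ is the Moore-Penrose inverse (identity weights). *)

From HB Require Import structures.
From mathcomp Require Import all_boot all_order all_algebra.
From mathcomp Require Import boolp classical_sets reals.
From mathcomp.real_closed Require Import complex.
Set Implicit Arguments. Unset Strict Implicit. Unset Printing Implicit Defensive.
Import Order.TTheory GRing.Theory Num.Theory.
Local Open Scope ring_scope.
Local Open Scope classical_set_scope.

Section Tensors.
Variables (R : realType) (N : nat) (I : 'I_N -> nat).

Definition idx : finType := {dffun forall k : 'I_N, 'I_(I k)}.

(* tensors in C^{I_1..N x I_1..N} and in C^{I_1..N} *)
Definition tensor := idx -> idx -> R[i].
Definition vtensor := idx -> R[i].

Definition ein (A B : tensor) : tensor := fun i j => \sum_k A i k * B k j.
Definition einv (A : tensor) (X : vtensor) : vtensor := fun i => \sum_k A i k * X k.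

Definition zeroT : tensor := fun _ _ => 0.
Definition idT : tensor := fun i j => if i == j then 1 else 0.

Definition ctr (A : tensor) : tensor := fun i j => Num.conj (A j i).

Definition inner (X Y : vtensor) : R[i] := \sum_i Num.conj (Y i) * X i.

Definition vnorm (X : vtensor) : R := Num.sqrt (complex.Re (inner X X)).

Definition hpd (M : tensor) : Prop :=
  ctr M = M /\ forall X : vtensor, X <> (fun _ => 0) -> 0 < inner (einv M X) X.

(* weighted norm ||X||_M = <M *N X, X>^{1/2} (the inner product is real >= 0 for HPD M) *)
Definition wnorm (M : tensor) (X : vtensor) : R := Num.sqrt (complex.Re (inner (einv M X) X)).

Definition opnorm (M Nw A : tensor) : R :=
  sup [set wnorm M (einv A X) | X in [set X | wnorm Nw X = 1]].

Definition numrange (A : tensor) : set R[i] :=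
  [set inner (einv A X) X | X in [set X | vnorm X = 1]].
Definition numradius (A : tensor) : R := sup [set Normc.normc z | z in numrange A].

Definition is_hpd_sqrt (S M : tensor) : Prop := hpd S /\ ein S S = M.

Definition is_inv (Y S : tensor) : Prop := ein S Y = idT /\ ein Y S = idT.

Definition is_wmpinv (M Nw A X : tensor) : Prop :=
  [/\ ein (ein A X) A = A,
      ein (ein X A) X = X,
      ctr (ein M (ein A X)) = ein M (ein A X)
    & ctr (ein Nw (ein X A)) = ein Nw (ein X A)].

End Tensors.

(* Put B := M^(1/2) A N^(-1/2).  Since ||X||_M = ||M^(1/2) X||, a bound
   ||A X||_M <= c ||X||_N is the bound ||B Y|| <= c ||Y|| for Y = N^(1/2) X,
   and likewise for the weighted inverse once we know
   B^+ M^(1/2) = N^(1/2) A^+_(M,N).  That identity follows from the Penrose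
   equations as in the uniqueness proof of the Moore-Penrose inverse, using
   M^(1/2) only as a left-cancellable factor (M^(1/2) is positive definite),
   so no inverse of M^(1/2) is needed.  Polarization,
   4 <B x, y> = sum_k i^k <B (x + i^k y), x + i^k y>, gives
   |<B x, y>| <= w(B) (||x||^2 + ||y||^2), hence ||B x|| <= 2 w(B) ||x||.
   The lower bound comes from A A^+ A = A applied to a vector X with A X <> 0:
   ||A X||_M <= ||A|| ||A^+ A X||_N <= ||A|| ||A^+|| ||A X||_M. *)

From Pilot Require Import Defs.
From HB Require Import structures.
From mathcomp Require Import all_boot all_order all_algebra.
From mathcomp Require Import boolp classical_sets reals.
From mathcomp.real_closed Require Import complex.
From mathcomp Require Import ring.
Set Implicit Arguments.
Unset Strict Implicit.
Unset Printing Implicit Defensive.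

Import Order.TTheory GRing.Theory Num.Theory.
Local Open Scope ring_scope.

Section TensorAlgebra.
Variables (R : realType) (N : nat) (I : 'I_N -> nat).
Local Notation tensor := (tensor R I).
Local Notation vtensor := (vtensor R I).
Local Notation "A ** B" := (ein A B) (at level 40, left associativity).
Local Notation "A ^H" := (ctr A) (at level 8, format "A ^H").
Local Notation idT := (@Defs.idT R N I).
Implicit Types (A B C L S : tensor) (X Y : vtensor).

Lemma einA A B C : A ** (B ** C) = A ** B ** C.
Proof.
apply: funext => i; apply: funext => j; rewrite /ein.
under [RHS]eq_bigr do rewrite big_distrl /=.
rewrite exchange_big /=; apply: eq_bigr => k _.
by rewrite big_distrr /=; apply: eq_bigr => l _; rewrite mulrA.
Qed.

Lemma ein1t A : idT ** A = A.
Proof.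
apply: funext => i; apply: funext => j; rewrite /ein /idT.
rewrite (bigD1 i) //= eqxx mul1r big1 ?addr0 // => k /negbTE.
by rewrite eq_sym => ->; rewrite mul0r.
Qed.

Lemma eint1 A : A ** idT = A.
Proof.
apply: funext => i; apply: funext => j; rewrite /ein /idT.
rewrite (bigD1 j) //= eqxx mulr1 big1 ?addr0 // => k /negbTE ->.
by rewrite mulr0.
Qed.

Lemma ctr_ein A B : (A ** B)^H = B^H ** A^H.
Proof.
apply: funext => i; apply: funext => j; rewrite /ctr /ein rmorph_sum.
by apply: eq_bigr => k _; rewrite rmorphM mulrC.
Qed.

Lemma ctr_idT : idT^H = idT.
Proof.
apply: funext => i; apply: funext => j; rewrite /ctr /idT eq_sym.
by case: (i == j); rewrite ?rmorph1 ?rmorph0.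
Qed.

Lemma einv_ein A B X : einv (A ** B) X = einv A (einv B X).
Proof.
apply: funext => i; rewrite /einv /ein.
under eq_bigr do rewrite big_distrl /=.
rewrite exchange_big /=; apply: eq_bigr => k _.
by rewrite big_distrr /=; apply: eq_bigr => l _; rewrite mulrA.
Qed.

Lemma einv0 A : einv A (fun _ => 0) = fun _ => 0.
Proof. by apply: funext => i; rewrite /einv big1 // => k _; rewrite mulr0. Qed.

Lemma inner_ctr A X Y : inner (einv A^H X) Y = inner X (einv A Y).
Proof.
rewrite /inner /einv /ctr.
under eq_bigr do rewrite big_distrr /=.
rewrite exchange_big /=; apply: eq_bigr => k _.
rewrite rmorph_sum big_distrl /=; apply: eq_bigr => l _.
by rewrite rmorphM /= mulrCA mulrA.
Qed.

Lemma inner0l Y : inner (fun _ => 0) Y = 0.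
Proof. by rewrite /inner big1 // => i _; rewrite mulr0. Qed.

Lemma hpd_ein_inj S : hpd S -> injective (ein S).
Proof.
case=> _ posS A B eqSAB; apply: funext => i; apply: funext => j.
pose v : vtensor := fun k => A k j - B k j.
have Sv0 : einv S v = fun _ => 0.
  apply: funext => k; rewrite /einv /v.
  under eq_bigr do rewrite mulrBr.
  by rewrite sumrB -/(ein S A k j) -/(ein S B k j) eqSAB subrr.
have [v0|/posS] := pselect (v = fun _ => 0); last by rewrite Sv0 inner0l ltxx.
by apply/eqP; rewrite -subr_eq0; apply/eqP; apply: (congr1 (fun f => f i) v0).
Qed.

Section WeightedPinvTransform.
Variables (A D M W Mh Nh Ni T : tensor).
Hypotheses (hD : is_wmpinv M W A D) (hMh : is_hpd_sqrt Mh M)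
  (hNh : is_hpd_sqrt Nh W) (hNi : is_inv Ni Nh).
Local Notation B := (Mh ** A ** Ni).
Hypothesis hT : is_wmpinv idT idT B T.

(* Identities carry an arbitrary left factor [L] so that they rewrite inside
   left-associated products. *)

Let ctr_Mh : Mh^H = Mh. Proof. by case: hMh => -[]. Qed.
Let ctr_Nh : Nh^H = Nh. Proof. by case: hNh => -[]. Qed.

Lemma ctrAM_AD L : L ** A^H ** Mh ** Mh ** A ** D = L ** A^H ** Mh ** Mh.
Proof.
case: hD => hADA _ hMAD _; move: hMAD; case: hMh => _ <- hMAD.
have ctr_MAD L' : L' ** D^H ** A^H ** Mh ** Mh = L' ** Mh ** Mh ** A ** D.
  by move: hMAD; rewrite !ctr_ein ctr_Mh -!einA => ->.
by rewrite -[in RHS]hADA !ctr_ein !einA ctr_MAD.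
Qed.

Lemma pinvMh_AD : T ** Mh ** A ** D = T ** Mh.
Proof.
case: hT => _ hTBT hBT _; rewrite !ein1t in hBT.
have eT : T = T ** T^H ** Ni^H ** A^H ** Mh.
  by rewrite -{1}hTBT -[T ** B ** T]einA -hBT !ctr_ein ctr_Mh !einA.
by rewrite eT ctrAM_AD.
Qed.

Lemma ANi_pinvB L : L ** A ** Ni ** T ** Mh ** A ** Ni = L ** A ** Ni.
Proof.
case: hT => hBTB _ _ _; case: hMh => hpd_Mh _.
have e : A ** Ni ** T ** Mh ** A ** Ni = A ** Ni.
  by apply: (hpd_ein_inj hpd_Mh); move: hBTB; rewrite !einA.
by rewrite -!einA; move: e; rewrite -!einA => ->.
Qed.

Let Ni_Nh L : L ** Ni ** Nh = L.
Proof. by case: hNi => _ e; rewrite -einA e eint1. Qed.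

Lemma ctr_NhDANi : (Nh ** D ** A ** Ni)^H = Nh ** D ** A ** Ni.
Proof.
case: hD => _ _ _; case: hNh => _ <- hWDA.
have ctr_WDA L : L ** A^H ** D^H ** Nh ** Nh = L ** Nh ** Nh ** D ** A.
  by move: hWDA; rewrite !ctr_ein ctr_Nh -!einA => ->.
have ctrNi_Nh : Ni^H ** Nh = idT.
  by case: hNi => e _; rewrite -{1}ctr_Nh -ctr_ein e ctr_idT.
rewrite !ctr_ein ctr_Nh -[LHS]eint1; case: hNi => <- _.
by rewrite !einA ctr_WDA ctrNi_Nh ein1t.
Qed.

Lemma NhDANi_pinvB : Nh ** D ** A ** Ni = T ** B.
Proof.
case: hD => hADA _ _ _; case: hT => _ _ _ hTB; rewrite !ein1t in hTB.
have ADA L : L ** A ** D ** A = L ** A by rewrite -!einA [A ** _]einA hADA.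
rewrite -{1}ctr_NhDANi -[X in X^H](ANi_pinvB (Nh ** D)).
have -> : Nh ** D ** A ** Ni ** T ** Mh ** A ** Ni
          = Nh ** D ** A ** Ni ** (T ** B) by rewrite !einA.
by rewrite ctr_ein hTB ctr_NhDANi !einA Ni_Nh ADA.
Qed.

Lemma pinv_transform : T ** Mh = Nh ** D.
Proof.
case: hD => _ hDAD _ _.
have DAD L : L ** D ** A ** D = L ** D by rewrite -!einA [D ** _]einA hDAD.
rewrite -pinvMh_AD -[in RHS]DAD -[Nh ** D ** A](Ni_Nh (Nh ** D ** A)).
by rewrite NhDANi_pinvB !einA Ni_Nh.
Qed.

End WeightedPinvTransform.

Lemma einvD A X Y : einv A (X \+ Y) = einv A X \+ einv A Y.
Proof.
apply: funext => i; rewrite /einv /= -big_split /=.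
by apply: eq_bigr => k _; rewrite mulrDr.
Qed.

Lemma einvZ A c X : einv A (c \*o X) = c \*o einv A X.
Proof.
apply: funext => i; rewrite /einv /= big_distrr /=.
by apply: eq_bigr => k _; rewrite mulrCA.
Qed.

Lemma innerDl X Y Z : inner (X \+ Y) Z = inner X Z + inner Y Z.
Proof. by rewrite /inner -big_split /=; apply: eq_bigr => k _; rewrite mulrDr. Qed.

Lemma innerDr X Y Z : inner Z (X \+ Y) = inner Z X + inner Z Y.
Proof. by rewrite /inner -big_split /=; apply: eq_bigr => k _; rewrite rmorphD mulrDl. Qed.

Lemma innerZl c X Z : inner (c \*o X) Z = c * inner X Z.
Proof. by rewrite /inner big_distrr /=; apply: eq_bigr => k _; rewrite mulrCA. Qed.

Lemma innerZr c X Z : inner Z (c \*o X) = Num.conj c * inner Z X.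
Proof. by rewrite /inner big_distrr /=; apply: eq_bigr => k _; rewrite rmorphM mulrA. Qed.

Lemma inner0r X : inner X (fun _ => 0) = 0.
Proof. by rewrite /inner big1 // => i _; rewrite rmorph0 mul0r. Qed.

Lemma inner_coord_le X i : `|X i| ^+ 2 <= inner X X.
Proof.
rewrite /inner (bigD1 i) //= -normCKC lerDl.
by apply: sumr_ge0 => j _; rewrite -normCKC exprn_ge0.
Qed.

Lemma inner_ge0 X : 0 <= inner X X.
Proof.
by apply: sumr_ge0 => i _; rewrite -normCKC exprn_ge0.
Qed.

Lemma inner_eq0 X : inner X X = 0 -> X = fun _ => 0.
Proof.
move=> X0; apply: funext => i; apply/eqP.
have : `|X i| ^+ 2 <= 0 by rewrite -X0 inner_coord_le.
by rewrite -normr_eq0 -(sqrf_eq0 `|X i|) eq_le exprn_ge0 ?andbT.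
Qed.

Lemma Re_inner_ge0 X : 0 <= complex.Re (inner X X).
Proof. by rewrite -ler0c RRe_real ?ger0_real ?inner_ge0. Qed.

Lemma vnorm_sqr X : ((vnorm X ^+ 2)%:C)%C = inner X X.
Proof. by rewrite /vnorm sqr_sqrtr ?Re_inner_ge0 // RRe_real ?ger0_real ?inner_ge0. Qed.

Lemma vnorm_eq0 X : vnorm X = 0 -> X = fun _ => 0.
Proof. by move=> X0; apply: inner_eq0; rewrite -vnorm_sqr X0 expr0n. Qed.

Lemma inner_scale (t : R) X Y :
  inner ((t%:C)%C \*o X) ((t%:C)%C \*o Y) = ((t ^+ 2)%:C)%C * inner X Y.
Proof. by rewrite innerZl innerZr [Num.conj _]conjc_real mulrA -rmorphM expr2. Qed.

Lemma Re_scale (t : R) (z : R[i]) : complex.Re ((t%:C)%C * z) = t * complex.Re z.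
Proof. by case: z => a b /=; rewrite mul0r subr0. Qed.

Lemma vnormZ (t : R) X : 0 <= t -> vnorm ((t%:C)%C \*o X) = t * vnorm X.
Proof.
move=> t0; rewrite /vnorm inner_scale Re_scale sqrtrM ?sqr_ge0 //.
by rewrite sqrtr_sqr ger0_norm.
Qed.

Lemma wnormZ M (t : R) X : 0 <= t -> wnorm M ((t%:C)%C \*o X) = t * wnorm M X.
Proof.
move=> t0; rewrite /wnorm einvZ inner_scale Re_scale sqrtrM ?sqr_ge0 //.
by rewrite sqrtr_sqr ger0_norm.
Qed.

Lemma wnorm_hpd_sqrt S M X : ctr S = S -> S ** S = M -> wnorm M X = vnorm (einv S X).
Proof. by move=> S_herm <-; rewrite /wnorm /vnorm einv_ein -{1}S_herm inner_ctr. Qed.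

Lemma wnorm_gt0 M X : hpd M -> X <> (fun _ => 0) -> 0 < wnorm M X.
Proof. by case=> _ posM /posM; rewrite ltcE => /andP[_]; rewrite sqrtr_gt0. Qed.

Lemma sup_ge0 (E : set R) : (forall x, E x -> 0 <= x) -> 0 <= sup E.
Proof.
move=> E_ge0; have [[[x Ex] ubE]|/sup_out->//] := pselect (has_sup E).
exact: le_trans (E_ge0 x Ex) (ub_le_sup ubE Ex).
Qed.

Lemma numrange_bounded B : has_ubound [set Normc.normc z | z in numrange B].
Proof.
exists (\sum_i \sum_k Normc.normc (B i k)) => _ [_ [X X1 <-] <-].
have coord_le1 i : `|X i| <= 1.
  have inner1 : inner X X = 1 by rewrite -vnorm_sqr X1 expr1n.
  by rewrite -(ler_pXn2r (n := 2)) ?nnegrE // expr1n -inner1 inner_coord_le.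
rewrite -lecR rmorph_sum.
change (`|inner (einv B X) X| <= \sum_i ((\sum_k Normc.normc (B i k))%:C)%C).
rewrite /inner /einv; apply: le_trans (ler_norm_sum _ _ _) _.
apply: ler_sum => i _; rewrite rmorph_sum normrM norm_conjC.
rewrite -[X in _ <= X]mul1r; apply: ler_pM => //.
apply: le_trans (ler_norm_sum _ _ _) _; apply: ler_sum => k _.
by rewrite normrM -[X in _ <= X]mulr1 ler_wpM2l.
Qed.

Lemma numradius_ge0 B : 0 <= numradius B.
Proof. by apply: sup_ge0 => _ [z _ <-]; case: z => a b; apply: sqrtr_ge0. Qed.

Lemma normc_real (t : R) : Normc.normc ((t%:C)%C) = `|t|.
Proof. by rewrite /Normc.normc /= expr0n addr0 sqrtr_sqr. Qed.

Lemma numradius_bound B X :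
  Normc.normc (inner (einv B X) X) <= numradius B * vnorm X ^+ 2.
Proof.
have [/vnorm_eq0->|Xpos] := eqVneq (vnorm X) 0.
  by rewrite einv0 inner0r Normc.normc0 mulr_ge0 ?numradius_ge0 ?sqr_ge0.
have X_gt0 : 0 < vnorm X by rewrite lt_def Xpos sqrtr_ge0.
pose c := (vnorm X)^-1; have c_ge0 : 0 <= c by rewrite invr_ge0 ltW.
have U1 : vnorm ((c%:C)%C \*o X) = 1 by rewrite vnormZ // mulVf.
have : Normc.normc (inner (einv B ((c%:C)%C \*o X)) ((c%:C)%C \*o X)) <= numradius B.
  apply: ub_le_sup; first exact: numrange_bounded.
  by exists (inner (einv B ((c%:C)%C \*o X)) ((c%:C)%C \*o X)); first exists ((c%:C)%C \*o X).
rewrite einvZ inner_scale Normc.normcM normc_real ger0_norm ?sqr_ge0 //.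
by rewrite /c exprVn mulrC ler_pdivrMr // exprn_gt0.
Qed.

Lemma normC_numradius_bound B X :
  `|inner (einv B X) X| <= ((numradius B)%:C)%C * inner X X.
Proof. by rewrite -vnorm_sqr -rmorphM lecR numradius_bound. Qed.

Lemma inner_expand X Y X' Y' c :
  inner (X \+ c \*o Y) (X' \+ c \*o Y') =
  inner X X' + Num.conj c * inner X Y' + c * inner Y X' + c * Num.conj c * inner Y Y'.
Proof. by rewrite !innerDl !innerDr !innerZl !innerZr; ring. Qed.

Lemma inner_polarization B X Y :
  let q c := inner (einv B (X \+ c \*o Y)) (X \+ c \*o Y) in
  4 * inner (einv B X) Y = q 1 - q (-1) + 'i * q 'i - 'i * q (-'i).
Proof.
rewrite /= !einvD !einvZ !inner_expand !rmorphN rmorph1 /= conjCi opprK.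
have : 'i * 'i = -1 :> R[i] := mulCii _.
move: ('i : R[i]) => j jj; apply/eqP; rewrite -subr_eq0; apply/eqP.
transitivity ((j * j + 1) * (2 * inner (einv B X) Y - 2 * inner (einv B Y) X)).
  by ring.
by rewrite jj addNr mul0r.
Qed.

Lemma inner_parallelogram X Y :
  let n c := inner (X \+ c \*o Y) (X \+ c \*o Y) in
  n 1 + n (-1) + n 'i + n (-'i) = 4 * (inner X X + inner Y Y).
Proof.
rewrite /= !inner_expand !rmorphN rmorph1 /= conjCi opprK.
have : 'i * 'i = -1 :> R[i] := mulCii _.
move: ('i : R[i]) => j jj; apply/eqP; rewrite -subr_eq0; apply/eqP.
transitivity ((j * j + 1) * (- 2 * inner Y Y)); first by ring.
by rewrite jj addNr mul0r.
Qed.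

Lemma normc_inner_le_numradius B X Y :
  Normc.normc (inner (einv B X) Y) <= numradius B * (vnorm X ^+ 2 + vnorm Y ^+ 2).
Proof.
rewrite -lecR rmorphM rmorphD /= !vnorm_sqr.
have bound4 : `|4 * inner (einv B X) Y| <= ((numradius B)%:C)%C * (4 * (inner X X + inner Y Y)).
  rewrite inner_polarization -inner_parallelogram !mulrDr.
  apply: le_trans (ler_normD _ _) _; rewrite normrN normrM normCi mul1r.
  apply: lerD; last exact: normC_numradius_bound.
  apply: le_trans (ler_normD _ _) _; rewrite normrM normCi mul1r.
  apply: lerD; last exact: normC_numradius_bound.
  apply: le_trans (ler_normD _ _) _; rewrite normrN.
  by apply: lerD; exact: normC_numradius_bound.
by move: bound4; rewrite normrM ger0_norm // mulrCA ler_pM2l.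
Qed.

Lemma vnorm_einv_le_numradius B X : vnorm (einv B X) <= 2 * numradius B * vnorm X.
Proof.
set a := vnorm X; set b := vnorm (einv B X).
have [->|b_neq0] := eqVneq b 0; first by rewrite !mulr_ge0 ?numradius_ge0 ?sqrtr_ge0.
have b_gt0 : 0 < b by rewrite lt_def b_neq0 sqrtr_ge0.
have a_gt0 : 0 < a.
  rewrite lt_def sqrtr_ge0 andbT; apply: contra_neq b_neq0 => /vnorm_eq0 X0.
  by rewrite /b X0 einv0 /vnorm inner0r sqrtr0.
(* rescale X to the length of B X, so that both terms of the bound are b^2 *)
pose t := b / a; have t_ge0 : 0 <= t by rewrite divr_ge0 ?ltW.
have := normc_inner_le_numradius B ((t%:C)%C \*o X) (einv B X).
rewrite einvZ innerZl Normc.normcM normc_real -vnorm_sqr normc_real vnormZ //.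
rewrite -/a -/b !ger0_norm ?sqr_ge0 // divfK ?gt_eqF //.
have -> : numradius B * (b ^+ 2 + b ^+ 2) = 2 * numradius B * b ^+ 2 by ring.
by rewrite ler_pM2r ?exprn_gt0 // ler_pdivrMr.
Qed.

Lemma exists_einv_neq0 A : A <> @zeroT R N I -> exists X, einv A X <> fun _ => 0.
Proof.
move=> A_neq0; apply: contra_notP A_neq0 => /forallNP A0.
have {}A0 X : einv A X = (fun _ => 0) := contrapT (A0 X).
apply: funext => i; apply: funext => j.
pose e_j : vtensor := fun k => if k == j then 1 else 0.
have /(congr1 (fun f => f i)) := A0 e_j; rewrite /einv /e_j /zeroT => <-.
rewrite (bigD1 j) //= eqxx mulr1 big1 ?addr0 // => k /negbTE ->.
by rewrite mulr0.
Qed.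

Section OperatorNorm.
Local Open Scope classical_set_scope.
Variables (M W A : tensor) (c : R).
Hypothesis A_bounded : forall X, wnorm M (einv A X) <= c * wnorm W X.

Lemma opnorm_ge0 : 0 <= opnorm M W A.
Proof. by apply: sup_ge0 => _ [X _ <-]; apply: sqrtr_ge0. Qed.

Lemma opnorm_le : 0 <= c -> opnorm M W A <= c.
Proof.
move=> c_ge0; rewrite /opnorm.
have [ne|/nonemptyPn->] := pselect ([set wnorm M (einv A X) | X in [set X | wnorm W X = 1]] !=set0).
  by apply: ge_sup ne _ => _ [X X1 <-]; rewrite -[c]mulr1 -X1.
by rewrite sup0.
Qed.

Lemma wnorm_le_opnorm X : wnorm M (einv A X) <= opnorm M W A * wnorm W X.
Proof.
have [W0|W_neq0] := eqVneq (wnorm W X) 0.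
  by apply: le_trans (A_bounded X) _; rewrite W0 !mulr0.
have W_gt0 : 0 < wnorm W X by rewrite lt_def W_neq0 sqrtr_ge0.
have iW_ge0 : 0 <= (wnorm W X)^-1 by rewrite invr_ge0 ltW.
pose U := (((wnorm W X)^-1)%:C)%C \*o X.
have U1 : wnorm W U = 1 by rewrite wnormZ // mulVf.
have : wnorm M (einv A U) <= opnorm M W A.
  apply: ub_le_sup; last by exists U.
  by exists c => _ [Y Y1 <-]; rewrite -[c]mulr1 -Y1.
by rewrite einvZ wnormZ // mulrC ler_pdivrMr.
Qed.

End OperatorNorm.

Lemma wnorm_einv_le_numradius Mh Nh M W A B X :
  is_hpd_sqrt Mh M -> is_hpd_sqrt Nh W -> Mh ** A = B ** Nh ->
  wnorm M (einv A X) <= 2 * numradius B * wnorm W X.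
Proof.
move=> [[Mh_herm _] MhMh] [[Nh_herm _] NhNh] MhA.
rewrite (wnorm_hpd_sqrt _ Mh_herm MhMh) (wnorm_hpd_sqrt _ Nh_herm NhNh).
by rewrite -einv_ein MhA einv_ein vnorm_einv_le_numradius.
Qed.

Lemma opnorm_pinv_ge1 M W A D a b :
  A <> @zeroT R N I -> hpd M -> A ** D ** A = A ->
  (forall X, wnorm M (einv A X) <= a * wnorm W X) ->
  (forall X, wnorm W (einv D X) <= b * wnorm M X) ->
  1 <= opnorm M W A * opnorm W M D.
Proof.
move=> /exists_einv_neq0[X AX_neq0] hM ADA A_bounded D_bounded.
pose Y := einv A X.
have AD_Y : einv A (einv D Y) = Y by rewrite /Y -!einv_ein ADA.
have Y_gt0 : 0 < wnorm M Y := wnorm_gt0 hM AX_neq0.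
have : wnorm M Y <= opnorm M W A * opnorm W M D * wnorm M Y.
  rewrite -{1}AD_Y -mulrA; apply: le_trans (wnorm_le_opnorm A_bounded _) _.
  by rewrite ler_wpM2l ?(opnorm_ge0 M W A) ?(wnorm_le_opnorm D_bounded).
by rewrite -ler_pdivrMr // divff ?gt_eqF.
Qed.

End TensorAlgebra.

Theorem theorem6p16 (R : realType) (N : nat) (I : 'I_N -> nat)
  (A M Nw Mh Nh Nhi Adag At Atdag : tensor R I) :
  A <> @zeroT R N I ->
  hpd M -> hpd Nw ->
  is_hpd_sqrt Mh M -> is_hpd_sqrt Nh Nw -> is_inv Nhi Nh ->
  is_wmpinv M Nw A Adag ->
  At = ein (ein Mh A) Nhi ->
  is_wmpinv (@idT R N I) (@idT R N I) At Atdag ->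
  1 <= opnorm M Nw A * opnorm Nw M Adag <= 4 * numradius At * numradius Atdag.
Proof.
move=> A_neq0 hM _ hMh hNh hNhi hAdag -> hAtdag.
have At_Nh : ein Mh A = ein (ein (ein Mh A) Nhi) Nh.
  by case: hNhi => _ NhiNh; rewrite -einA NhiNh eint1.
have Atdag_Mh := pinv_transform hAdag hMh hNh hNhi hAtdag.
have A_bounded X := wnorm_einv_le_numradius X hMh hNh At_Nh.
have Adag_bounded X := wnorm_einv_le_numradius X hNh hMh (esym Atdag_Mh).
apply/andP; split.
  by case: hAdag => ADA _ _ _; apply: opnorm_pinv_ge1 A_bounded Adag_bounded.
rewrite -mulrA -[4]/((2 * 2)%:R) natrM mulrACA.
by apply: ler_pM; rewrite ?opnorm_ge0 ?opnorm_le ?mulr_ge0 ?numradius_ge0.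
Qed.
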